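(* Let $k=\mathbb{F}_q$ with $q=p^m$, $p$ prime, $m\geq 1$. (1) Let $p_0,p',q_0,q'$ be four closed points of degree $2$ in $\mathbb{P}^2$ such that $\{p_0,p'\}$ is in general position and $\{q_0,q'\}$ is in general position. Then there exists $A\in\mathrm{Aut}(\mathbb{P}^2_k)=\mathrm{PGL}_3(k)$ sending $p_0$ onto $q_0$ and $p'$ onto $q'$. (2) Let $p_0,q_0$ be two closed points of degree $4$ in $\mathbb{P}^2$, each in general position. Then there exists $A\in\mathrm{Aut}(\mathbb{P}^2_k)$ sending $p_0$ onto $q_0$.
   Context: A closed point of degree $d$ of $\mathbb{P}^2_k$ corresponds to a Galois orbit of $d$ geometric points. A collection of closed points is in general position if the four geometric points involved (the two geometric components of each of the two degree-$2$ points, resp. the four geometric components of the degree-$4$ point) are such that no three are collinear. *)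

From HB Require Import structures.
From mathcomp Require Import all_boot all_order all_algebra all_field.
Set Implicit Arguments. Unset Strict Implicit. Unset Printing Implicit Defensive.
Import GRing.Theory.
Local Open Scope ring_scope.

(* Conventions: k = F_q is realised as the subfield {x | x^q = x} of a finite
   field L with #|L| = q^d.  Geometric points of P^2 (over L) are nonzero row
   vectors 'rV[L]_3 up to nonzero scalars; the Galois group Gal(L/k) is
   generated by the q-Frobenius, acting coordinatewise.  A closed point of
   degree d (whose geometric points are all defined over L) is the Frobenius
   orbit of a representative vector v, of exact projective size d. *)

Section Defs.
Variable L : finFieldType.

Definition frobv (q : nat) (v : 'rV[L]_3) : 'rV[L]_3 := map_mx (fun x => x ^+ q) v.

Definition peq (u v : 'rV[L]_3) : Prop := exists c : L, c != 0 /\ u = c *: v.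

Definition on_pt (q : nat) (v u : 'rV[L]_3) : Prop :=
  exists i : nat, peq u (iter i (frobv q) v).

Definition closed_deg (q d : nat) (v : 'rV[L]_3) : Prop :=
  v != 0 /\
  (forall i j : nat, (i < j < d)%N -> ~ peq (iter i (frobv q) v) (iter j (frobv q) v)) /\
  peq (iter d (frobv q) v) v.

Definition mx3 (u v w : 'rV[L]_3) : 'M[L]_3 :=
  \matrix_(i < 3, j < 3)
    (match nat_of_ord i with 0 => u ord0 j | 1 => v ord0 j | _ => w ord0 j end).

Definition collinear (u v w : 'rV[L]_3) : Prop := \det (mx3 u v w) = 0.

Definition gen_pos4 (f : 'I_4 -> 'rV[L]_3) : Prop :=
  forall i j l : 'I_4, i != j -> j != l -> i != l -> ~ collinear (f i) (f j) (f l).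

Definition in_PGL3 (q : nat) (A : 'M[L]_3) : Prop :=
  (forall i j, A i j ^+ q = A i j) /\ A \in unitmx.

Definition maps_onto (q : nat) (A : 'M[L]_3) (v w : 'rV[L]_3) : Prop :=
  (forall u, on_pt q v u -> on_pt q w (u *m A)) /\
  (forall u', on_pt q w u' -> exists u, on_pt q v u /\ peq u' (u *m A)).

End Defs.

Definition pts22 (L : finFieldType) (q : nat) (v w : 'rV[L]_3) (i : 'I_4) : 'rV[L]_3 :=
  match nat_of_ord i with
  | 0 => v | 1 => frobv q v | 2 => w | _ => frobv q w end.

Definition pts4 (L : finFieldType) (q : nat) (v : 'rV[L]_3) (i : 'I_4) : 'rV[L]_3 :=
  iter (nat_of_ord i) (frobv q) v.

From HB Require Import structures.
From mathcomp Require Import all_boot all_order all_algebra all_field.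
From mathcomp Require Import ring.
Set Implicit Arguments. Unset Strict Implicit. Unset Printing Implicit Defensive.
Import GRing.Theory.
Local Open Scope ring_scope.

(* Four geometric points in general position form a projective frame, and
   PGL_3(L) acts simply transitively on frames: there is a matrix B over L
   carrying the geometric points of the source onto those of the target, and
   it is unique up to a scalar.  Since both configurations are unions of
   Frobenius orbits, matched compatibly, the Frobenius conjugate of B is again
   such a matrix, hence equal to c B.  Iterating [d] times, where
   #|L| = q^d, shows that c has norm 1 over F_q; by Hilbert 90 (here: the
   unit group of L is cyclic) c^-1 = mu^(q-1), and then mu B has entries in
   F_q and represents the required element of PGL_3(F_q). *)

Definition i30 : 'I_3 := @Ordinal 3 0 isT.
Definition i31 : 'I_3 := @Ordinal 3 1 isT.
Definition i32 : 'I_3 := @Ordinal 3 2 isT.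
Definition i40 : 'I_4 := @Ordinal 4 0 isT.
Definition i41 : 'I_4 := @Ordinal 4 1 isT.
Definition i42 : 'I_4 := @Ordinal 4 2 isT.
Definition i43 : 'I_4 := @Ordinal 4 3 isT.

Lemma ord4_cases (i : 'I_4) : [\/ i = i40, i = i41, i = i42 | i = i43].
Proof.
case: i => -[|[|[|[|i]]]] // lt_i4;
  [constructor 1|constructor 2|constructor 3|constructor 4]; exact: val_inj.
Qed.

Lemma unity_root_exp_surj (F : finFieldType) (a b : nat) (x : F) :
  #|F|.-1 = (a * b)%N -> x ^+ b = 1 -> exists mu : F, mu ^+ a = x.
Proof.
move=> cardF xb1; set n := #|F|.-1 in cardF.
have n_gt0 : (0 < n)%N.
  by rewrite /n -(cardC1 0); apply/card_gt0P; exists 1; rewrite !inE oner_neq0.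
have unit_pow (y : F) : y != 0 -> y ^+ n = 1.
  move=> y0; have cardFS : #|F| = n.+1 by rewrite prednK // (cardD1 0).
  by rewrite -(mulfK y0 (y ^+ n)) -exprSr -cardFS expf_card divff.
have b_gt0 : (0 < b)%N by move: n_gt0; rewrite cardF muln_gt0 => /andP[].
have x0 : x != 0.
  by apply: contra_eq_neq xb1 => ->; rewrite expr0n gtn_eqF // eq_sym oner_neq0.
have /hasP[z _ z_prim] : has n.-primitive_root (enum (predC1 (0 : F))).
  apply: cyclic.has_prim_root => //; last by rewrite -cardE cardC1.
    by apply/allP => y; rewrite mem_enum inE => y0; rewrite unity_rootE unit_pow.
  exact: enum_uniq.
have [[i _] /= xE] := prim_rootP z_prim (unit_pow x x0).
have : (n %| i * b)%N by rewrite (prim_order_dvd z_prim) exprM -xE xb1.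
rewrite cardF dvdn_pmul2r // => /dvdnP[k ik].
by exists (z ^+ k); rewrite -exprM xE ik.
Qed.

Section ProjectiveFrames.
Variable L : finFieldType.
Implicit Types (u v w : 'rV[L]_3) (a b c : L) (f g : 'I_4 -> 'rV[L]_3).

Lemma peq_refl u : peq u u.
Proof. by exists 1; rewrite oner_neq0 scale1r. Qed.

Lemma peqZ c u : c != 0 -> peq (c *: u) u.
Proof. by exists c. Qed.

Lemma peq_sym u v : peq u v -> peq v u.
Proof.
move=> [c [c0 ->]]; exists c^-1; split; first by rewrite invr_eq0.
by rewrite scalerA mulVf // scale1r.
Qed.

Lemma peq_trans v u w : peq u v -> peq v w -> peq u w.
Proof.
move=> [c [c0 ->]] [c' [c0' ->]]; exists (c * c'); split; first exact: mulf_neq0.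
by rewrite scalerA.
Qed.

Lemma peq_mulmx u v (B : 'M[L]_3) : peq u v -> peq (u *m B) (v *m B).
Proof. by move=> [c [c0 ->]]; exists c; rewrite -scalemxAl. Qed.

Definition row3 a b c : 'rV[L]_3 :=
  \row_(j < 3) match nat_of_ord j with 0 => a | 1 => b | _ => c end.

Lemma row3_eta (r : 'rV[L]_3) : r = row3 (r 0 i30) (r 0 i31) (r 0 i32).
Proof.
by apply/rowP => -[[|[|[|j]]] lt_j3]; rewrite !mxE //; congr (r 0 _); apply: val_inj.
Qed.

Lemma mul_row3_mx3 a b c u v w : row3 a b c *m mx3 u v w = a *: u + b *: v + c *: w.
Proof.
apply/rowP => j; rewrite !mxE !big_ord_recl big_ord0 !mxE /=.
by rewrite addr0 addrA !(ord1 (0 : 'I_1)).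
Qed.

Lemma mx3_mulmx u v w (B : 'M[L]_3) :
  mx3 u v w *m B = mx3 (u *m B) (v *m B) (w *m B).
Proof.
apply/matrixP => -[[|[|[|i]]] lt_i3] j //; rewrite !mxE /=;
  by apply: eq_bigr => k _; rewrite !mxE (ord1 0).
Qed.

Lemma mx3Z c u v w : mx3 (c *: u) (c *: v) (c *: w) = c *: mx3 u v w.
Proof. by apply/matrixP => -[[|[|[|i]]] lt_i3] j //; rewrite !mxE. Qed.

Lemma mx3_scale_rows a b c u v w :
  mx3 (a *: u) (b *: v) (c *: w) = diag_mx (row3 a b c) *m mx3 u v w.
Proof. by rewrite mul_diag_mx; apply/matrixP => -[[|[|[|i]]] lt_i3] j //; rewrite !mxE. Qed.

Lemma mx3_unitmx u v w : ~ collinear u v w -> mx3 u v w \in unitmx.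
Proof. by move=> ncol; rewrite unitmxE unitfE; apply/eqP. Qed.

Lemma mx3_free a b c u v w :
  ~ collinear u v w -> a *: u + b *: v + c *: w = 0 -> [/\ a = 0, b = 0 & c = 0].
Proof.
move=> /mx3_unitmx U rel.
have /rowP r0 : row3 a b c = 0 by rewrite -(mulmxK U (row3 a b c)) mul_row3_mx3 rel mul0mx.
by move: (r0 i30) (r0 i31) (r0 i32); rewrite !mxE.
Qed.

Lemma ncollinear_combination b c u v w : ~ collinear u v w -> u != b *: v + c *: w.
Proof.
move=> ncol; apply/eqP => uE.
have [] := @mx3_free 1 (- b) (- c) _ _ _ ncol; last by move/eqP; rewrite oner_eq0.
by rewrite uE scale1r !scaleNr -addrA -opprD subrr.
Qed.

Lemma gen_pos4_coords f : gen_pos4 f ->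
  exists a b c, [/\ a != 0, b != 0, c != 0 & f i43 = a *: f i40 + b *: f i41 + c *: f i42].
Proof.
move=> gf; have U := mx3_unitmx (gf i40 i41 i42 isT isT isT).
set r := f i43 *m invmx (mx3 (f i40) (f i41) (f i42)).
have f3E : f i43 = r 0 i30 *: f i40 + r 0 i31 *: f i41 + r 0 i32 *: f i42.
  by rewrite -mul_row3_mx3 -row3_eta mulmxKV.
exists (r 0 i30), (r 0 i31), (r 0 i32); split => //; apply/eqP => r0; rewrite r0 in f3E.
- by move: (ncollinear_combination (r 0 i31) (r 0 i32) (gf i43 i41 i42 isT isT isT));
    rewrite f3E scale0r add0r eqxx.
- by move: (ncollinear_combination (r 0 i30) (r 0 i32) (gf i43 i40 i42 isT isT isT));
    rewrite f3E scale0r addr0 eqxx.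
- by move: (ncollinear_combination (r 0 i30) (r 0 i31) (gf i43 i40 i41 isT isT isT));
    rewrite f3E scale0r addr0 eqxx.
Qed.

Definition std_frame (i : 'I_4) : 'rV[L]_3 :=
  match nat_of_ord i with
  | 0 => row3 1 0 0 | 1 => row3 0 1 0 | 2 => row3 0 0 1 | _ => row3 1 1 1 end.

Lemma gen_pos4_std_frame f : gen_pos4 f ->
  exists2 N, N \in unitmx & forall i, peq (std_frame i *m N) (f i).
Proof.
move=> gf; have [a [b [c [a0 b0 c0 f3E]]]] := gen_pos4_coords gf.
exists (mx3 (a *: f i40) (b *: f i41) (c *: f i42)).
  rewrite mx3_scale_rows unitmx_mul mx3_unitmx ?andbT; last exact: gf.
  rewrite unitmxE det_diag unitfE !big_ord_recl big_ord0 !mxE /=.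
  by rewrite mulr1 !mulf_neq0.
move=> i; case: (ord4_cases i) => -> /=; rewrite mul_row3_mx3 ?scale1r ?scale0r ?add0r ?addr0.
- exact: peqZ.
- exact: peqZ.
- exact: peqZ.
- by rewrite f3E; apply: peq_refl.
Qed.

Lemma gen_pos4_transitive f g : gen_pos4 f -> gen_pos4 g ->
  exists2 B, B \in unitmx & forall i, peq (f i *m B) (g i).
Proof.
move=> /gen_pos4_std_frame[Nf Uf fN] /gen_pos4_std_frame[Ng Ug gN].
exists (invmx Nf *m Ng) => [|i]; first by rewrite unitmx_mul unitmx_inv Uf Ug.
apply: (peq_trans _ (gN i)); rewrite mulmxA; apply: peq_mulmx.
by rewrite -[X in peq _ X](mulmxK Uf); apply/peq_mulmx/peq_sym.
Qed.

Lemma gen_pos4_eigen_scalar f (C : 'M[L]_3) : gen_pos4 f ->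
  (forall i, peq (f i *m C) (f i)) -> exists l, C = l%:M.
Proof.
move=> gf fC; have [a [b [c [a0 b0 c0 f3E]]]] := gen_pos4_coords gf.
have [[l0 [_ E0]] [l1 [_ E1]] [l2 [_ E2]] [l3 [_ E3]]] := And4 (fC i40) (fC i41) (fC i42) (fC i43).
have rel : (a * (l0 - l3)) *: f i40 + (b * (l1 - l3)) *: f i41 + (c * (l2 - l3)) *: f i42 = 0.
  move: E3; rewrite f3E !mulmxDl -!scalemxAl E0 E1 E2.
  move=> /rowP E3; apply/rowP => j; move: (E3 j); rewrite !mxE.
  set x := f i40 0 j; set y := f i41 0 j; set z := f i42 0 j => E3j.
  by rewrite -[0](subrr (l3 * (a * x + b * y + c * z))) -{1}E3j; ring.
have [/eqP + /eqP + /eqP] := mx3_free (gf i40 i41 i42 isT isT isT) rel.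
rewrite !mulf_eq0 (negPf a0) (negPf b0) (negPf c0) !subr_eq0 /= => /eqP e0 /eqP e1 /eqP e2.
exists l3; have U := mx3_unitmx (gf i40 i41 i42 isT isT isT).
by rewrite -(mulKmx U C) mx3_mulmx E0 E1 E2 e0 e1 e2 mx3Z -mul_mx_scalar mulKmx.
Qed.

End ProjectiveFrames.

Section Frobenius.
Variables (L : finFieldType) (q : nat).
Implicit Types u v w : 'rV[L]_3.

Definition frobmx (r s : nat) (B : 'M[L]_(r, s)) : 'M[L]_(r, s) := map_mx (fun x => x ^+ q) B.

Lemma iter_frobmx r s j (B : 'M[L]_(r, s)) :
  iter j (@frobmx r s) B = map_mx (fun x => x ^+ (q ^ j)) B.
Proof.
elim: j => [|j IH]; first by apply/matrixP => i k; rewrite !mxE expr1.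
by rewrite iterS IH; apply/matrixP => i k; rewrite !mxE expnSr exprM.
Qed.

Lemma iter_frobmx_card r s d (B : 'M[L]_(r, s)) :
  #|L| = (q ^ d)%N -> iter d (@frobmx r s) B = B.
Proof. by move=> cardL; rewrite iter_frobmx; apply/matrixP => i k; rewrite mxE -cardL expf_card. Qed.

Lemma frobmxZ r s c (B : 'M[L]_(r, s)) : frobmx (c *: B) = c ^+ q *: frobmx B.
Proof. by apply/matrixP => i k; rewrite !mxE exprMn. Qed.

Lemma peq_frobv u v : peq u v -> peq (frobv q u) (frobv q v).
Proof. by move=> [c [c0 ->]]; exists (c ^+ q); rewrite expf_neq0 // -frobmxZ. Qed.

Hypothesis q_pchar : [pchar L].-nat q.

Lemma frobmxM r s t (A : 'M[L]_(r, s)) (B : 'M[L]_(s, t)) :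
  frobmx (A *m B) = frobmx A *m frobmx B.
Proof.
have frob0 : 0 ^+ q = 0 :> L by case/andP: q_pchar => q_gt0 _; rewrite expr0n gtn_eqF.
apply/matrixP => i k; rewrite !mxE (big_morph _ (fun x y => exprDn_pchar x y q_pchar) frob0).
by apply: eq_bigr => j _; rewrite !mxE exprMn.
Qed.

Lemma iter_frobv_mulmx j u (A : 'M[L]_3) :
  frobmx A = A -> iter j (frobv q) (u *m A) = iter j (frobv q) u *m A.
Proof. by move=> FA; elim: j => //= j ->; rewrite [frobv q _]frobmxM FA. Qed.

Lemma iter_frobmx_semiinvariant j c (B : 'M[L]_3) :
  frobmx B = c *: B -> iter j (@frobmx 3 3) B = c ^+ (\sum_(i < j) q ^ i) *: B.
Proof.
move=> FB; elim: j => [|j IH]; first by rewrite big_ord0 scale1r.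
rewrite iterS IH frobmxZ FB scalerA -exprM -exprSr big_ord_recl expn0 add1n big_distrl.
by congr (c ^+ _.+1 *: B); apply: eq_bigr => i _; rewrite expnSr.
Qed.

Hypothesis q_gt1 : (1 < q)%N.

Lemma frobmx_semiinvariant_descent d c (B : 'M[L]_3) :
  #|L| = (q ^ d)%N -> B \in unitmx -> frobmx B = c *: B ->
  exists2 mu, mu != 0 & in_PGL3 q (mu *: B).
Proof.
move=> cardL UB FB; set s := (\sum_(i < d) q ^ i)%N.
have B0 : B != 0 by apply: contraTneq UB => ->; rewrite unitmxE det0 unitr0.
have c0 : c != 0.
  apply: contraNneq B0 => c0; apply/eqP/matrixP => i k; move/matrixP/(_ i k): FB.
  by rewrite c0 scale0r !mxE => /eqP; rewrite expf_eq0 => /andP[_ /eqP].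
have cs : c ^+ s = 1.
  have /eqP : (c ^+ s - 1) *: B = 0.
    by rewrite scalerBl scale1r -iter_frobmx_semiinvariant // iter_frobmx_card // subrr.
  by rewrite scaler_eq0 (negPf B0) orbF subr_eq0 => /eqP.
have [mu muE] : exists mu, mu ^+ q.-1 = c^-1.
  by apply: unity_root_exp_surj; rewrite ?cardL ?predn_exp // exprVn cs invr1.
have mu0 : mu != 0.
  apply: contra_eq_neq muE => ->.
  by rewrite expr0n gtn_eqF -?subn1 ?subn_gt0 // eq_sym invr_neq0.
exists mu => //; split; last by rewrite unitmxZ ?unitfE.
move=> i k; move/matrixP/(_ i k): FB; rewrite !mxE => FBik.
by rewrite exprMn FBik -(prednK (ltnW q_gt1)) exprS muE mulrA divfK.
Qed.

Lemma gen_pos4_frob_transitive d (f g : 'I_4 -> 'rV[L]_3) (pre : 'I_4 -> 'I_4) :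
  #|L| = (q ^ d)%N -> gen_pos4 f -> gen_pos4 g ->
  (forall i, f i = frobv q (f (pre i))) -> (forall i, g i = frobv q (g (pre i))) ->
  exists2 A, in_PGL3 q A & forall i, peq (f i *m A) (g i).
Proof.
move=> cardL gf gg f_frob g_frob; have [B UB fBg] := gen_pos4_transitive gf gg.
have [c FB] : exists c, frobmx B = c *: B.
  suff [c /(congr1 (mulmx^~ B))] : exists c, frobmx B *m invmx B = c%:M.
    by rewrite mulmxKV // mul_scalar_mx; exists c.
  apply: (gen_pos4_eigen_scalar gf) => i; rewrite mulmxA.
  rewrite -[X in peq _ X](mulmxK UB); apply: peq_mulmx.
  rewrite {1}f_frob -[frobv q _ *m _]frobmxM; apply: (peq_trans (peq_frobv (fBg (pre i)))).
  by rewrite -g_frob; apply: peq_sym.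
have [mu mu0 PA] := frobmx_semiinvariant_descent cardL UB FB.
exists (mu *: B) => // i; rewrite -scalemxAr.
exact: peq_trans (peqZ _ mu0) (fBg i).
Qed.

Lemma maps_onto_of_peq (A : 'M[L]_3) v w :
  in_PGL3 q A -> peq (v *m A) w -> maps_onto q A v w.
Proof.
move=> [Aq _] vAw; have FA : frobmx A = A by apply/matrixP => i k; rewrite mxE Aq.
have peq_iter j u u' : peq u u' -> peq (iter j (frobv q) u) (iter j (frobv q) u').
  by move=> uu'; elim: j => //= j; apply: peq_frobv.
split=> [u [j uv] | u' [j u'w]].
  exists j; apply: (peq_trans _ (peq_iter j _ _ vAw)).
  by rewrite iter_frobv_mulmx //; apply: peq_mulmx.
exists (iter j (frobv q) v); split; first by exists j; apply: peq_refl.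
rewrite -iter_frobv_mulmx //; apply: (peq_trans u'w).
exact/peq_iter/peq_sym.
Qed.

End Frobenius.

Lemma pchar_nat_card (F : finFieldType) (p m k : nat) :
  prime p -> #|F| = ((p ^ m) ^ k)%N -> [pchar F].-nat (p ^ m)%N.
Proof.
move=> p_pr cardF.
by rewrite pnatX pnatE // (card_finPcharP (n := (m * k)%N)) // cardF expnM.
Qed.

Definition frob_pre22 (i : 'I_4) : 'I_4 :=
  match nat_of_ord i with 0 => i41 | 1 => i40 | 2 => i43 | _ => i42 end.

Definition frob_pre4 (i : 'I_4) : 'I_4 :=
  match nat_of_ord i with 0 => i43 | 1 => i40 | 2 => i41 | _ => i42 end.

Lemma pts22_frob (L : finFieldType) (q : nat) (v w : 'rV[L]_3) :
  #|L| = (q ^ 2)%N -> forall i, pts22 q v w i = frobv q (pts22 q v w (frob_pre22 i)).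
Proof.
move=> cardL i; case: (ord4_cases i) => -> //=;
  by rewrite -[RHS]/(iter 2 (@frobmx L q 1 3) _) iter_frobmx_card.
Qed.

Lemma pts4_frob (L : finFieldType) (q : nat) (v : 'rV[L]_3) :
  #|L| = (q ^ 4)%N -> forall i, pts4 q v i = frobv q (pts4 q v (frob_pre4 i)).
Proof.
move=> cardL i; case: (ord4_cases i) => -> //=.
by rewrite -[RHS]/(iter 4 (@frobmx L q 1 3) _) iter_frobmx_card.
Qed.

Theorem lemma4p1 (p m : nat) (L2 L4 : finFieldType) :
  prime p -> (0 < m)%N ->
  #|L2| = ((p ^ m) ^ 2)%N -> #|L4| = ((p ^ m) ^ 4)%N ->
  (* (1) *)
  (forall p0 p' q0 q' : 'rV[L2]_3,
     closed_deg (p ^ m) 2 p0 -> closed_deg (p ^ m) 2 p' ->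
     closed_deg (p ^ m) 2 q0 -> closed_deg (p ^ m) 2 q' ->
     gen_pos4 (pts22 (p ^ m) p0 p') -> gen_pos4 (pts22 (p ^ m) q0 q') ->
     exists A : 'M[L2]_3,
       in_PGL3 (p ^ m) A /\ maps_onto (p ^ m) A p0 q0 /\ maps_onto (p ^ m) A p' q')
  /\
  (* (2) *)
  (forall p0 q0 : 'rV[L4]_3,
     closed_deg (p ^ m) 4 p0 -> closed_deg (p ^ m) 4 q0 ->
     gen_pos4 (pts4 (p ^ m) p0) -> gen_pos4 (pts4 (p ^ m) q0) ->
     exists A : 'M[L4]_3, in_PGL3 (p ^ m) A /\ maps_onto (p ^ m) A p0 q0).
Proof.
move=> p_pr m_gt0 card2 card4.
have q_gt1 : (1 < p ^ m)%N by rewrite -{1}(expn0 p) ltn_exp2l ?prime_gt1.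
have char2 := pchar_nat_card p_pr card2; have char4 := pchar_nat_card p_pr card4.
split=> [p0 p' q0 q' _ _ _ _ gp gq | p0 q0 _ _ gp gq].
- have [A PA Af] := gen_pos4_frob_transitive char2 q_gt1 card2 gp gq
    (pts22_frob p0 p' card2) (pts22_frob q0 q' card2).
  by exists A; split=> //; split; apply: (maps_onto_of_peq char2 PA); [exact: Af i40 | exact: Af i42].
- have [A PA Af] := gen_pos4_frob_transitive char4 q_gt1 card4 gp gq
    (pts4_frob p0 card4) (pts4_frob q0 card4).
  exists A; split=> //; apply: (maps_onto_of_peq char4 PA).
  exact: (Af i40 : peq (p0 *m A) q0).
Qed.
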